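(* Let $\mathcal{C}\le\mathbb{F}_q^n$ be a linear code with $q\neq 2$, and assume every codeword of $\mathcal{C}$ has even weight. Let $c_1,\dots,c_r\in\mathcal{C}$ be codewords of weight $2$ such that $c_i\notin\langle c_j\rangle_{\mathbb{F}_q}$ for all $i\neq j$. Then $\mathrm{supp}(c_i)\cap\mathrm{supp}(c_j)=\emptyset$ for all $i\neq j$.
   Context: The support of $c\in\mathbb{F}_q^n$ is $\mathrm{supp}(c)=\{k: c_k\neq 0\}$ and its weight is $|\mathrm{supp}(c)|$. *)

From HB Require Import structures.
From mathcomp Require Import all_boot all_order all_algebra all_field.
Set Implicit Arguments. Unset Strict Implicit. Unset Printing Implicit Defensive.
Import GRing.Theory.
Local Open Scope ring_scope.

Definition supp (F : finFieldType) (n : nat) (c : 'rV[F]_n) : {set 'I_n} :=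
  [set k | c 0 k != 0].

Definition wt (F : finFieldType) (n : nat) (c : 'rV[F]_n) : nat := #|supp c|.

From HB Require Import structures.
From mathcomp Require Import all_boot all_order all_algebra all_field.
Import GRing.Theory.
Local Open Scope ring_scope.

(* If two weight-2 codewords v, w share a support position k, then v - m w
   lies in the code for every scalar m.  When supp v = supp w, the choice of
   m that cancels position k leaves a codeword of weight at most 1, which by
   evenness is 0, so v is a multiple of w.  Otherwise supp v = {k, a} and
   supp w = {k, b} with a <> b, and since q > 2 some m is neither 0 nor the
   cancelling scalar; then v - m w has weight 3, which is odd. *)

Section Support.
Variables (F : finFieldType) (n : nat).
Implicit Types (v x : 'rV[F]_n).

Lemma wt_eq0 x : (wt x == 0%N) = (x == 0).
Proof.
rewrite /wt cards_eq0; apply/eqP/eqP => [suppx0|->]; last first.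
  by apply/setP => t; rewrite !inE mxE eqxx.
apply/rowP => t; rewrite mxE; apply/eqP.
by have := in_set0 t; rewrite -suppx0 inE => /negbFE.
Qed.

Lemma even_wt_le1 x : ~~ odd (wt x) -> (wt x <= 1)%N -> x = 0.
Proof. by move=> even le1; apply/eqP; rewrite -wt_eq0; case: (wt x) even le1 => [|[]]. Qed.

Lemma wt2_suppP v k :
  wt v = 2%N -> k \in supp v -> exists2 a, a != k & supp v = [set k; a].
Proof.
move=> wt2 vk; have : #|supp v :\ k| = 1%N by move: wt2; rewrite /wt (cardsD1 k) vk => -[].
move/eqP/cards1P => [a suppDk]; exists a.
  by have := set11 a; rewrite -suppDk !inE => /andP[].
by rewrite -suppDk setD1K.
Qed.

End Support.

Arguments even_wt_le1 {F n x}.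
Arguments wt2_suppP {F n v k}.

Lemma exists_neq0_neq {F : finFieldType} (x : F) :
  #|F| != 2%N -> exists m : F, (m != 0) && (m != x).
Proof.
move=> cardF; apply/existsP; apply: contraR cardF => /existsPn avoid.
have : [set: F] \subset [set 0; x].
  by apply/subsetP => m _; move: (avoid m); rewrite !inE negb_and !negbK.
move/subset_leq_card; rewrite cardsT => le2.
have two : (2 <= #|F|)%N by have := max_card (mem [set (0 : F); 1]); rewrite cards2 eq_sym oner_eq0.
by rewrite eqn_leq two andbT (leq_trans le2) // cards2; case: (_ != _).
Qed.

Section Overlap.
Variables (F : finFieldType) (n : nat) (v w : 'rV[F]_n) (k a b : 'I_n).
Hypotheses (suppv : supp v = [set k; a]) (suppw : supp w = [set k; b]).

Let lam := v 0 k / w 0 k.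

Let wk : w 0 k != 0. Proof. by have := set21 k b; rewrite -suppw inE. Qed.

Let v0 t : t \notin [set k; a] -> v 0 t = 0.
Proof. by rewrite -suppv inE negbK => /eqP. Qed.
Let w0 t : t \notin [set k; b] -> w 0 t = 0.
Proof. by rewrite -suppw inE negbK => /eqP. Qed.

Lemma coef_subZ_overlap m : ((v - m *: w) 0 k == 0) = (m == lam).
Proof. by rewrite !mxE subr_eq0 -[RHS](inj_eq (mulIf wk)) /lam divfK // eq_sym. Qed.

Lemma supp_subZ_same_supp : a = b -> supp (v - lam *: w) \subset [set a].
Proof.
move=> eab; apply/subsetP => t; apply: contraLR; rewrite in_set1 inE negbK => ta.
case: (eqVneq t k) => [->|tk]; first by rewrite coef_subZ_overlap.
by rewrite !mxE v0 ?w0 ?mulr0 ?subrr // -?eab !inE negb_or tk.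
Qed.

Lemma supp_subZ_distinct_supp m : a != k -> b != k -> a != b ->
  m != 0 -> m != lam -> supp (v - m *: w) = [set k; a; b].
Proof.
move=> ak bk ab m0 mlam; apply/setP => t; rewrite [LHS]inE !inE.
case: (eqVneq t k) => [->|tk]; first by rewrite coef_subZ_overlap mlam.
case: (eqVneq t a) => [->|ta].
  rewrite !mxE (w0 a) ?mulr0 ?subr0 ?eqxx ?orbT; last by rewrite !inE negb_or ak ab.
  by have := set22 k a; rewrite -suppv inE.
rewrite !mxE v0 ?sub0r ?oppr_eq0 ?mulf_eq0 ?(negbTE m0) /=; last by rewrite !inE negb_or tk.
by have /setP/(_ t) := suppw; rewrite !inE (negbTE tk).
Qed.

End Overlap.

Arguments supp_subZ_same_supp {F n v w k a b}.
Arguments supp_subZ_distinct_supp {F n v w k a b} suppv suppw {m}.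

Theorem corollary3p2 (F : finFieldType) (n : nat) (C : {vspace 'rV[F]_n})
  (r : nat) (c : 'I_r -> 'rV[F]_n) :
  #|F| != 2%N ->
  (forall x, x \in C -> ~~ odd (wt x)) ->
  (forall i, c i \in C) ->
  (forall i, wt (c i) = 2%N) ->
  (forall i j, i != j -> c i \notin <[c j]>%VS) ->
  forall i j, i != j -> supp (c i) :&: supp (c j) = set0.
Proof.
move=> cardF evenC cC wt2 indep i j ij.
apply/eqP/set0Pn => -[k]; rewrite inE => /andP[ki kj].
have [a ak suppi] := wt2_suppP (wt2 i) ki.
have [b bk suppj] := wt2_suppP (wt2 j) kj.
have inC m : c i - m *: c j \in C by rewrite memvB ?memvZ ?cC.
set lam := c i 0 k / c j 0 k.
have [eab | ab] := eqVneq a b.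
- have le1 := subset_leq_card (supp_subZ_same_supp suppi suppj eab).
  rewrite cards1 in le1.
  have /eqP := even_wt_le1 (evenC _ (inC lam)) le1.
  rewrite subr_eq0 => /eqP ci_lin.
  by move: (indep i j ij); rewrite ci_lin memvZ ?memv_line.
- have [m /andP[m0 mlam]] := exists_neq0_neq lam cardF.
  have := evenC _ (inC m); rewrite /wt (supp_subZ_distinct_supp suppi suppj) //.
  by rewrite setUC cardsU1 cards2 !inE (negbTE bk) eq_sym (negbTE ab) eq_sym ak.
Qed.
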